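(* Let $n,k,\gamma$ be positive integers with $k\ge3\lceil\gamma/2\rceil$ and $n\ge2k+\gamma$. Then $$B_2(n,k,k+\gamma;3)\ge 2^{\left\lfloor\frac{n-2k+1}{k+1}\right\rfloor\left\lfloor\frac{k}{\lceil\gamma/2\rceil}\right\rfloor}.$$
   Context: For a prime power $q$, $\mathcal{G}_q(n,k)$ denotes the set of all $k$-dimensional subspaces of $\mathbb{F}_q^n$. An $\alpha$-$(n,k,\delta)_q^c$ covering Grassmannian code is a subset $\mathcal{C}\subseteq\mathcal{G}_q(n,k)$ (no repeated codewords) such that every set of $\alpha$ distinct codewords of $\mathcal{C}$ spans a subspace of $\mathbb{F}_q^n$ of dimension at least $k+\delta$. $B_q(n,k,\delta;\alpha)$ denotes the maximum size of an $\alpha$-$(n,k,\delta)_q^c$ code. *)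

From mathcomp Require Import all_boot all_algebra.
Set Implicit Arguments. Unset Strict Implicit. Unset Printing Implicit Defensive.
Import GRing.Theory.
Local Open Scope ring_scope.

(* Subspaces of F_q^n are {vspace 'rV[F]_n} (vector.v); G_q(n,k) = those of dimension k. *)

Definition is_cov3_code (F : fieldType) (n k delta : nat)
  (C : seq {vspace 'rV[F]_n}) : Prop :=
  uniq C /\
  (forall U, U \in C -> \dim U = k) /\
  (forall U V W, U \in C -> V \in C -> W \in C ->
     U != V -> V != W -> U != W ->
     (k + delta <= \dim (U + V + W)%VS)%N).

(* "B_q(n,k,delta;3) >= N" : there is such a code with at least N codewords
   (B is the maximum size, the set of codes being finite). *)
Definition B3_ge (F : fieldType) (n k delta N : nat) : Prop :=
  exists C : seq {vspace 'rV[F]_n}, @is_cov3_code F n k delta C /\ (N <= size C)%N.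

From HB Require Import structures.
From mathcomp Require Import all_boot all_algebra.
From mathcomp Require Import zify ring.
Set Implicit Arguments. Unset Strict Implicit. Unset Printing Implicit Defensive.
Import GRing.Theory.
Local Open Scope ring_scope.

(* Let c = ceil(g/2) and B = floor((n - 2k)/c).  To a vector v of F_2^k
   attach the polynomial f_v carrying its coordinates on the exponents
   [0, c) and [2c, k + c), with a gap of c zero coefficients on [c, 2c).  For
   each polynomial psi of degree < B, the subspace U_psi consists of the words
   (v, coefficients of f_v * psi(X^c)) of length n.  Distinct U_psi meet
   trivially.  A vector of (U_1 + U_2) :&: U_3 gives, in characteristic 2,
   f_1 p(X^c) = f_2 q(X^c) with p = psi_1 + psi_3 and q = psi_2 + psi_3, so
   after cancelling gcd(p, q) both f_i are multiples of a common cofactor t;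
   the gaps in f_1 and f_2 force all but k - 2c coefficients of t to vanish.
   Hence dim (U_1 + U_2 + U_3) >= 3k - (k - 2c) >= 2k + g, and there are
   2^B such subspaces. *)

Lemma poly_eq0_coef (R : nzSemiRingType) (m : nat) (p : {poly R}) :
  (forall i, (i < m)%N -> p`_i = 0) -> (size p <= m)%N -> p = 0.
Proof.
move=> Hp sp; apply/polyP => i; rewrite coef0.
by case: (ltnP i m) => [/Hp // | mi]; rewrite nth_default // (leq_trans sp).
Qed.

Section CompXn.
Variables (R : idomainType) (c : nat).
Hypothesis c_gt0 : (0 < c)%N.

Lemma comp_polyXn_eq0 (p : {poly R}) : (p \Po 'X^c == 0) = (p == 0).
Proof. by rewrite comp_poly_eq0 // size_polyXn. Qed.

Lemma size_comp_polyXn (p : {poly R}) :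
  p != 0 -> size (p \Po 'X^c) = ((size p).-1 * c).+1.
Proof.
move=> p_neq0; have := size_comp_poly p 'X^c; rewrite size_polyXn /= => <-.
by rewrite prednK // lt0n size_poly_eq0 comp_polyXn_eq0.
Qed.

Lemma size_mul_comp_polyXn (t u : {poly R}) (m : nat) : u != 0 ->
  (size (t * (u \Po 'X^c))%R <= m)%N -> (size t <= m - (size u).-1 * c)%N.
Proof.
move=> u_neq0; have [->|t_neq0] := eqVneq t 0; first by rewrite size_poly0.
rewrite size_mul ?comp_polyXn_eq0 // size_comp_polyXn // addnS /=; lia.
Qed.

Lemma coef_mul_comp_polyXn (t q : {poly R}) (r : nat) : (r < c)%N ->
  (t * (q \Po 'X^c))`_(c + r) = t`_(c + r) * q`_0 + t`_r * q`_1.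
Proof.
move=> r_lt_c.
have dec_q : q = (q`_0)%:P + q`_1 *: 'X + 'X^2 * \poly_(i < size q) q`_i.+2.
  apply/polyP => i; rewrite !coefD coefC coefZ coefX coefXnM coef_poly.
  case: i => [|[|i]] /=; rewrite ?mulr0 ?mulr1 ?addr0 ?add0r //.
  by rewrite subn2 /=; case: ltnP => // hi; rewrite nth_default //; lia.
rewrite [q in q \Po _]dec_q !comp_polyD comp_polyC comp_polyZ comp_polyM comp_polyX comp_Xn_poly.
rewrite -exprM !mulrDr !coefD coefMC -scalerAr coefZ coefMXn ltnNge leq_addr /=.
rewrite addKn mulrCA coefXnM ifT; last by lia.
by rewrite addr0 [q`_1 * _]mulrC.
Qed.

End CompXn.

Lemma coprimep_mulE (R : fieldType) (a b f g : {poly R}) :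
  coprimep a b -> b != 0 -> f * a = g * b ->
  exists t, f = t * b /\ g = t * a.
Proof.
move=> cop_ab b_neq0 Efg.
have cop_ba : coprimep b a by rewrite coprimep_sym.
have b_dvd_f : b %| f by rewrite -(Gauss_dvdpl _ cop_ba) Efg dvdp_mull.
exists (f %/ b); split; first by rewrite divpK.
by apply: (mulIf b_neq0); rewrite -Efg -mulrA [a * b]mulrC mulrA divpK.
Qed.

Lemma linear2_eq0 (R : idomainType) (a0 a1 b0 b1 x y : R) :
  a0 * b1 != a1 * b0 -> x * a0 + y * a1 = 0 -> x * b0 + y * b1 = 0 ->
  x = 0 /\ y = 0.
Proof.
rewrite -subr_eq0 => det_neq0 Ea Eb.
have Ex : x * (a0 * b1 - a1 * b0) = (x * a0 + y * a1) * b1 - (x * b0 + y * b1) * a1.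
  by ring.
have Ey : y * (a0 * b1 - a1 * b0) = (x * b0 + y * b1) * a0 - (x * a0 + y * a1) * b0.
  by ring.
rewrite Ea Eb !mul0r subrr in Ex Ey.
by move: Ex Ey => /eqP; rewrite mulf_eq0 (negbTE det_neq0) orbF => /eqP ->
  /eqP; rewrite mulf_eq0 (negbTE det_neq0) orbF => /eqP ->.
Qed.

Lemma poly_size2_eq (R : nzSemiRingType) (p q : {poly R}) :
  (size p <= 2)%N -> (size q <= 2)%N -> p`_0 = q`_0 -> p`_1 = q`_1 -> p = q.
Proof.
move=> sp sq E0 E1; apply/polyP => -[|[|i]] //.
by rewrite !nth_default // ?(leq_trans sp) ?(leq_trans sq).
Qed.

Lemma dimv_leq_lin (K : fieldType) (vT : vectType K) (m : nat)
  (f : vT -> 'rV[K]_m) (X : {vspace vT}) : linear f ->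
  (forall w, w \in X -> f w = 0 -> w = 0) -> (\dim X <= m)%N.
Proof.
move=> f_lin f_inj.
pose fL : {linear vT -> 'rV[K]_m} := HB.pack f (GRing.isLinear.Build _ _ _ _ f f_lin).
have capX : (X :&: lker (linfun fL) = 0)%VS.
  apply/eqP; rewrite -subv0; apply/subvP => w; rewrite memv_cap memv_ker lfunE memv0.
  by case/andP => wX /eqP fw0; apply/eqP; apply: f_inj.
rewrite -(limg_dim_eq capX).
by apply: leq_trans (dimvS (subvf _)) _; rewrite dimvf dim_matrix mul1r.
Qed.

Definition gapped (R : nzSemiRingType) (k c : nat) (f : {poly R}) : Prop :=
  (size f <= k + c)%N /\ forall r, (r < c)%N -> f`_(c + r) = 0.

(* Positions of the [k - 2c] coefficients of a cofactor [t] that are not forced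
   by the gap conditions on [t * p(X^c)] and [t * q(X^c)]; which ones they are
   depends on [maxn (size p) (size q)]. *)
Definition pivot (R : nzSemiRingType) (c : nat) (p q : {poly R}) (j : nat) : nat :=
  if (3 < maxn (size p) (size q))%N then j
  else if maxn (size p) (size q) == 3 then (if (j < c)%N then j else j + c)%N
  else (j + c + c)%N.

Section Cofactor.
Variables (R : fieldType) (k c : nat).
Hypotheses (c_gt0 : (0 < c)%N) (ck : (3 * c <= k)%N).
Variables p q t : {poly R}.
Hypotheses (p_neq0 : p != 0) (q_neq0 : q != 0).
Hypotheses (gap_p : gapped k c (t * (p \Po 'X^c)))
           (gap_q : gapped k c (t * (q \Po 'X^c))).
Hypothesis pivot_eq0 : forall j, (j < k - 2 * c)%N -> t`_(pivot c p q j) = 0.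

Lemma size_cofactor :
  (size t <= k + c - (maxn (size p) (size q)).-1 * c)%N.
Proof.
have sp := size_mul_comp_polyXn c_gt0 p_neq0 gap_p.1.
have sq := size_mul_comp_polyXn c_gt0 q_neq0 gap_q.1.
by case: (leqP (size p) (size q)) => pq; rewrite ?(maxn_idPr pq) ?(maxn_idPl (ltnW pq)).
Qed.

Lemma cofactor_gap_eq (u : {poly R}) r : gapped k c (t * (u \Po 'X^c)) ->
  (r < c)%N -> t`_(c + r) * u`_0 + t`_r * u`_1 = 0.
Proof. by move=> gap_u r_lt_c; rewrite -coef_mul_comp_polyXn // gap_u.2. Qed.

Lemma cofactor_eq0_big : (3 < maxn (size p) (size q))%N -> t = 0.
Proof.
move=> big; apply: (@poly_eq0_coef _ (k - 2 * c)).
  by move=> j /pivot_eq0; rewrite /pivot big.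
apply: leq_trans size_cofactor _.
have : (3 * c <= (maxn (size p) (size q)).-1 * c)%N.
  by rewrite leq_mul2r; apply/orP; right; lia.
by move: ((maxn (size p) (size q)).-1 * c)%N => m; lia.
Qed.

Lemma cofactor_eq0_small :
  (maxn (size p) (size q) <= 2)%N -> p`_0 * q`_1 != p`_1 * q`_0 -> t = 0.
Proof.
move=> small det_neq0.
have two : maxn (size p) (size q) = 2.
  apply/eqP; rewrite eqn_leq small /= leq_max.
  case: (ltnP 1 (size p)) => //= sp; case: (ltnP 1 (size q)) => //= sq.
  by move: det_neq0; rewrite (nth_default 0 sp) (nth_default 0 sq) mulr0 mul0r eqxx.
have zero r : (r < c)%N -> t`_(c + r) = 0 /\ t`_r = 0.
  by move=> r_lt_c; apply: linear2_eq0 det_neq0 (cofactor_gap_eq gap_p r_lt_c)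
    (cofactor_gap_eq gap_q r_lt_c).
apply: (@poly_eq0_coef _ k); last first.
  by apply: leq_trans size_cofactor _; rewrite two mul1n addnK.
move=> i i_lt_k; case: (ltnP i c) => [i_lt_c | c_le_i]; first by case: (zero i i_lt_c).
case: (ltnP i (c + c)) => [i_lt2c | le2c_i].
  by rewrite -(subnKC c_le_i); case: (zero (i - c)%N) => //; lia.
have := @pivot_eq0 (i - c - c)%N; rewrite /pivot ltnNge two /= !subnK //; last by lia.
by apply; lia.
Qed.

Hypothesis cop : coprimep p q.

Lemma cofactor_eq0_mid : maxn (size p) (size q) = 3 -> t = 0.
Proof.
move=> mid; have pivot_mid j : (j < k - 2 * c)%N ->
    t`_(if (j < c)%N then j else j + c)%N = 0.
  by move=> /pivot_eq0; rewrite /pivot mid.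
have low r : (r < c)%N -> t`_r = 0.
  by move=> r_lt_c; have := pivot_mid r; rewrite r_lt_c; apply; lia.
have [u [u0_neq0 gap_u]] : exists u : {poly R}, u`_0 != 0 /\ gapped k c (t * (u \Po 'X^c)).
  case: (eqVneq q`_0 0) => q0; last by exists q.
  case: (eqVneq p`_0 0) => p0; last by exists p.
  have X_dvd (v : {poly R}) : v`_0 = 0 -> 'X %| v.
    by move=> v0; rewrite -[X in X %| _]subr0 -polyC0 dvdp_XsubCl /root horner_coef0 v0.
  have := coprimep_dvdr (X_dvd _ p0) (coprimep_dvdl (X_dvd _ q0) cop).
  by rewrite coprimepp size_polyX.
have mid_gap r : (r < c)%N -> t`_(c + r) = 0.
  move=> r_lt_c; have := cofactor_gap_eq gap_u r_lt_c.
  by rewrite (low r) // mul0r addr0 => /eqP; rewrite mulf_eq0 (negbTE u0_neq0) orbF => /eqP.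
apply: (@poly_eq0_coef _ (k - c)); last first.
  by apply: leq_trans size_cofactor _; rewrite mid mul2n -addnn subnDA addnK.
move=> i i_lt; case: (ltnP i c) => [/low // | c_le_i].
case: (ltnP i (c + c)) => [i_lt2c | le2c_i].
  by rewrite -(subnKC c_le_i) mid_gap //; lia.
have i_c : ~~ (i - c < c)%N by rewrite -leqNgt; lia.
by have := pivot_mid (i - c)%N; rewrite (negbTE i_c) subnK //; apply; lia.
Qed.

End Cofactor.

Local Notation F := 'F_2.

Lemma pchar2_polyF2 : (2 \in [pchar {poly F}])%N.
Proof. by rewrite pchar_poly pchar_Fp. Qed.

Lemma F2_cases (x : F) : x = 0 \/ x = 1.
Proof. by case: x => [[|[|m]]] //= Hm; [left|right]; apply/val_inj. Qed.

Lemma F2_det_neq0 (a0 a1 b0 b1 : F) :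
  (a0, a1) != (0, 0) -> (b0, b1) != (0, 0) -> (a0, a1) != (b0, b1) ->
  a0 * b1 != a1 * b0.
Proof.
by case: (F2_cases a0) => ->; case: (F2_cases a1) => ->;
   case: (F2_cases b0) => ->; case: (F2_cases b1) => ->.
Qed.

Lemma F2_size2_det_neq0 (p q : {poly F}) :
  (maxn (size p) (size q) <= 2)%N -> p != 0 -> q != 0 -> p != q ->
  p`_0 * q`_1 != p`_1 * q`_0.
Proof.
rewrite geq_max => /andP[sp sq] p_neq0 q_neq0 pq.
have s0 : (size (0 : {poly F})%R <= 2)%N by rewrite size_poly0.
apply: F2_det_neq0.
- by apply: contraNneq p_neq0 => -[E0 E1]; rewrite (poly_size2_eq sp s0) ?coef0.
- by apply: contraNneq q_neq0 => -[E0 E1]; rewrite (poly_size2_eq sq s0) ?coef0.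
- by apply: contraNneq pq => -[E0 E1]; rewrite (poly_size2_eq sp sq).
Qed.

(* For [h = f + g] with [f * p(X^c) = g * q(X^c)] this is the [j]-th kept
   coefficient of the common cofactor [h / (p1 + q1)(X^c)], where [p1] and
   [q1] are [p] and [q] divided by their gcd. *)
Definition cofactor_coef (c : nat) (p q h : {poly F}) (j : nat) : F :=
  let p1 := p %/ gcdp p q in let q1 := q %/ gcdp p q in
  (h %/ ((p1 + q1) \Po 'X^c))`_(pivot c p1 q1 j).

Lemma gapped_pair_eq0 (k c : nat) (p q f g : {poly F}) :
  (0 < c)%N -> (3 * c <= k)%N -> p != 0 -> q != 0 -> p != q ->
  gapped k c f -> gapped k c g -> f * (p \Po 'X^c) = g * (q \Po 'X^c) ->
  (forall j, (j < k - 2 * c)%N -> cofactor_coef c p q (f + g) j = 0) ->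
  f = 0 /\ g = 0.
Proof.
move=> c_gt0 ck p_neq0 q_neq0 pq gap_f gap_g Efg coef_eq0.
have cop : coprimep (p %/ gcdp p q) (q %/ gcdp p q) by rewrite coprimep_div_gcd ?p_neq0.
have d_neq0 : gcdp p q != 0 by rewrite gcdp_eq0 negb_and p_neq0.
have Ep : p = p %/ gcdp p q * gcdp p q by rewrite divpK // dvdp_gcdl.
have Eq : q = q %/ gcdp p q * gcdp p q by rewrite divpK // dvdp_gcdr.
move: coef_eq0; rewrite /cofactor_coef.
move: cop Ep Eq; set d := gcdp p q; set p1 := p %/ d; set q1 := q %/ d => cop Ep Eq coef_eq0.
have p1_neq0 : p1 != 0 by apply: contraNneq p_neq0 => p10; rewrite Ep p10 mul0r.
have q1_neq0 : q1 != 0 by apply: contraNneq q_neq0 => q10; rewrite Eq q10 mul0r.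
have p1q1 : p1 != q1 by apply: contraNneq pq => E; rewrite Ep Eq E.
have Efg1 : f * (p1 \Po 'X^c) = g * (q1 \Po 'X^c).
  apply: (mulIf (_ : d \Po 'X^c != 0)); first by rewrite comp_polyXn_eq0.
  by rewrite -!mulrA -!comp_polyM -Ep -Eq.
have q1c_neq0 : q1 \Po 'X^c != 0 by rewrite comp_polyXn_eq0.
have [t [Ef Eg]] := coprimep_mulE (coprimep_comp_poly 'X^c cop) q1c_neq0 Efg1.
suff t_eq0 : t = 0 by rewrite Ef Eg t_eq0 !mul0r.
have sum_neq0 : (p1 + q1) \Po 'X^c != 0.
  by rewrite comp_polyXn_eq0 // -(oppr_pchar2 pchar2_polyF2 q1) subr_eq0.
have {}coef_eq0 j : (j < k - 2 * c)%N -> t`_(pivot c p1 q1 j) = 0.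
  by move=> /coef_eq0; rewrite Ef Eg -mulrDr -comp_polyD [q1 + p1]addrC mulpK.
rewrite Ef in gap_f; rewrite Eg in gap_g.
have [big|] := ltnP 3 (maxn (size p1) (size q1)).
  exact: (cofactor_eq0_big c_gt0 ck p1_neq0 q1_neq0 gap_g gap_f coef_eq0 big).
rewrite leq_eqVlt ltnS => /orP[/eqP mid | small].
  exact: (cofactor_eq0_mid c_gt0 ck p1_neq0 q1_neq0 gap_g gap_f coef_eq0 cop mid).
apply: (cofactor_eq0_small c_gt0 ck p1_neq0 q1_neq0 gap_g gap_f coef_eq0 small).
exact: F2_size2_det_neq0.
Qed.

Section GapPoly.
Variables (R : nzRingType) (k c : nat).

Definition gap_pos (j : nat) : nat := if (j < c)%N then j else (j + c)%N.

Definition gap_poly (v : 'rV[R]_k) : {poly R} := \sum_(j < k) v 0 j *: 'X^(gap_pos j).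

Lemma gap_poly_is_linear : linear gap_poly.
Proof.
move=> a u v; rewrite /gap_poly scaler_sumr -big_split /=; apply: eq_bigr => j _.
by rewrite !mxE scalerDl scalerA.
Qed.

HB.instance Definition _ :=
  GRing.isLinear.Build R 'rV[R]_k {poly R} *:%R gap_poly gap_poly_is_linear.

Lemma coef_gap_poly (v : 'rV[R]_k) (i : nat) :
  (gap_poly v)`_i = \sum_(j < k) v 0 j * (i == gap_pos j)%:R.
Proof. by rewrite coef_sum; apply: eq_bigr => j _; rewrite coefZ coefXn. Qed.

Lemma coef_gap_poly_pos (v : 'rV[R]_k) (j : 'I_k) : (gap_poly v)`_(gap_pos j) = v 0 j.
Proof.
have gap_pos_inj : injective gap_pos.
  by move=> i i'; rewrite /gap_pos; case: ifP => hi; case: ifP => hi'; lia.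
rewrite coef_gap_poly (bigD1 j) //= eqxx mulr1 big1 ?addr0 // => i ne_ij.
by rewrite (inj_eq gap_pos_inj) val_eqE eq_sym (negbTE ne_ij) mulr0.
Qed.

Lemma gap_poly_gapped (v : 'rV[R]_k) : gapped k c (gap_poly v).
Proof.
split.
  apply: leq_trans (size_sum _ _ _) _; apply/bigmax_leqP => j _.
  apply: leq_trans (size_scale_leq _ _) _; rewrite size_polyXn /gap_pos.
  by case: ifP => _; have := ltn_ord j; lia.
move=> r r_lt_c; rewrite coef_gap_poly big1 // => j _.
have /negbTE-> : (c + r != gap_pos j)%N by rewrite /gap_pos; case: ifP => hj; apply/eqP; lia.
by rewrite mulr0.
Qed.

Lemma gap_poly_eq0 (v : 'rV[R]_k) : gap_poly v = 0 -> v = 0.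
Proof. by move=> v0; apply/rowP => j; rewrite mxE -coef_gap_poly_pos v0 coef0. Qed.

End GapPoly.

Section Code.
Variables (n k c B : nat).
Hypotheses (c_gt0 : (0 < c)%N) (B_gt0 : (0 < B)%N) (n_ge : (2 * k + c * B <= n)%N).

Definition code_word (psi : {poly F}) (v : 'rV[F]_k) : 'rV[F]_n :=
  poly_rV (rVpoly v + 'X^k * (gap_poly c v * (psi \Po 'X^c))).

Lemma code_word_is_linear psi : linear (code_word psi).
Proof.
move=> a u v; rewrite /code_word !linearP /= mulrDl mulrDr -scalerAl -scalerAr.
by rewrite addrACA -scalerDr linearD linearZ.
Qed.

HB.instance Definition _ psi := GRing.isLinear.Build F 'rV[F]_k 'rV[F]_n *:%R
  (code_word psi) (code_word_is_linear psi).

Definition code_space (psi : {poly F}) : {vspace 'rV[F]_n} :=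
  (linfun (code_word psi) @: fullv)%VS.

Definition prefix_rV (w : 'rV[F]_n) : 'rV[F]_k := poly_rV (rVpoly w).

Definition suffix_poly (w : 'rV[F]_n) : {poly F} := rVpoly w %/ 'X^k.

Lemma prefix_rV_is_linear : linear prefix_rV.
Proof. by move=> a w1 w2; rewrite /prefix_rV !linearP. Qed.

HB.instance Definition _ := GRing.isLinear.Build F 'rV[F]_n 'rV[F]_k *:%R
  prefix_rV prefix_rV_is_linear.

Lemma suffix_poly_is_linear : linear suffix_poly.
Proof. by move=> a w1 w2; rewrite /suffix_poly linearP divpD divpZl. Qed.

HB.instance Definition _ := GRing.isLinear.Build F 'rV[F]_n {poly F} *:%R
  suffix_poly suffix_poly_is_linear.

Section Psi.
Variable psi : {poly F}.
Hypothesis size_psi : (size psi <= B)%N.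

Lemma rVpoly_code_word v :
  rVpoly (code_word psi v) = rVpoly v + 'X^k * (gap_poly c v * (psi \Po 'X^c)).
Proof.
apply: poly_rV_K; apply: leq_trans (size_polyD _ _) _; rewrite geq_max.
apply/andP; split; first by apply: leq_trans (size_poly _ _) _; lia.
apply: leq_trans (size_polyMleq _ _) _; rewrite size_polyXn.
have sP : (size (psi \Po 'X^c) <= (B.-1 * c).+1)%N.
  apply: leq_trans (size_comp_poly_leq _ _) _.
  by rewrite size_polyXn ltnS leq_mul2r -!subn1 leq_sub2r ?orbT.
have cB : (c * B = c + B.-1 * c)%N by rewrite -{1}(prednK B_gt0) mulnS mulnC.
have sgP : (size (gap_poly c v * (psi \Po 'X^c))%R <= k + c * B)%N.
  apply: leq_trans (size_polyMleq _ _) _; rewrite -subn1 leq_subLR.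
  apply: leq_trans (leq_add (gap_poly_gapped c v).1 sP) _.
  by rewrite cB; move: (B.-1 * c)%N => m; lia.
rewrite -subn1 leq_subLR; apply: leq_trans (leq_add (leqnn _) sgP) _.
by move: n_ge; move: (c * B)%N => cB'; lia.
Qed.

Lemma prefix_code_word v : prefix_rV (code_word psi v) = v.
Proof.
rewrite /prefix_rV rVpoly_code_word linearD /= rVpolyK -[RHS]addr0; congr (_ + _).
by apply/rowP => j; rewrite !mxE coefXnM ltn_ord.
Qed.

Lemma suffix_code_word v : suffix_poly (code_word psi v) = gap_poly c v * (psi \Po 'X^c).
Proof.
rewrite /suffix_poly rVpoly_code_word divpD mulKp ?monic_neq0 ?monicXn // divp_small ?add0r //.
by rewrite size_polyXn ltnS size_poly.
Qed.

Lemma code_spaceP w : reflect (exists v, w = code_word psi v) (w \in code_space psi).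
Proof.
by apply: (iffP memv_imgP) => -[v]; [move=> _ ->| move=> ->]; exists v; rewrite ?lfunE ?memvf.
Qed.

Lemma dim_code_space : \dim (code_space psi) = k.
Proof.
rewrite /code_space limg_dim_eq ?dimvf ?dim_matrix ?mul1r //.
apply/eqP; rewrite capfv -subv0; apply/subvP => v; rewrite memv_ker lfunE memv0 => /eqP v0.
by rewrite -(prefix_code_word v) v0 /prefix_rV !linear0.
Qed.

End Psi.

Lemma code_space_cap_eq0 (psi1 psi2 : {poly F}) :
  (size psi1 <= B)%N -> (size psi2 <= B)%N -> psi1 != psi2 ->
  (code_space psi1 :&: code_space psi2 = 0)%VS.
Proof.
move=> s1 s2 psi12; apply/eqP; rewrite -subv0; apply/subvP => w.
rewrite memv_cap memv0 => /andP[/(code_spaceP psi1)[v1 ->] /(code_spaceP psi2)[v2 E]].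
have v12 : v1 = v2 by rewrite -(prefix_code_word s1 v1) -(prefix_code_word s2 v2) E.
move: E; rewrite -{}v12 => /(congr1 suffix_poly); rewrite !suffix_code_word //.
move/eqP; rewrite -subr_eq0 -mulrBr -comp_polyB mulf_eq0 comp_polyXn_eq0 // subr_eq0.
by rewrite (negbTE psi12) orbF => /eqP/gap_poly_eq0->; rewrite linear0.
Qed.

Lemma code_space_inj (psi1 psi2 : {poly F}) : (0 < k)%N ->
  (size psi1 <= B)%N -> (size psi2 <= B)%N ->
  code_space psi1 = code_space psi2 -> psi1 = psi2.
Proof.
move=> k_gt0 s1 s2 E; apply/eqP/negPn/negP => /(code_space_cap_eq0 s1 s2).
rewrite E capvv => /(congr1 (@dimv _ _)); rewrite dim_code_space // dimv0 => k0.
by rewrite k0 in k_gt0.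
Qed.

Lemma dim_code_space_sum_cap (psi1 psi2 psi3 : {poly F}) : (3 * c <= k)%N ->
  (size psi1 <= B)%N -> (size psi2 <= B)%N -> (size psi3 <= B)%N ->
  psi1 != psi2 -> psi2 != psi3 -> psi1 != psi3 ->
  (\dim ((code_space psi1 + code_space psi2) :&: code_space psi3) <= k - 2 * c)%N.
Proof.
move=> ck s1 s2 s3 psi12 psi23 psi13.
set p := psi1 + psi3; set q := psi2 + psi3.
have p_neq0 : p != 0 by rewrite /p -(oppr_pchar2 pchar2_polyF2 psi3) subr_eq0.
have q_neq0 : q != 0 by rewrite /q -(oppr_pchar2 pchar2_polyF2 psi3) subr_eq0.
have pq : p != q by rewrite /p /q (inj_eq (addIr psi3)).
pose L (w : 'rV[F]_n) : 'rV[F]_(k - 2 * c) :=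
  \row_j cofactor_coef c p q (gap_poly c (prefix_rV w)) j.
apply: (@dimv_leq_lin _ _ _ L).
  move=> a w1 w2; apply/rowP => j.
  by rewrite !mxE /cofactor_coef !linearP divpD divpZl coefD coefZ.
move=> w /memv_capP[/memv_addP[w1 /(code_spaceP psi1)[v1 ->]
  [w2 /(code_spaceP psi2)[v2 ->] ->]] /(code_spaceP psi3)[v3 E3]] Lw0.
have v3E : v3 = v1 + v2 by rewrite -(prefix_code_word s3 v3) -E3 linearD /= !prefix_code_word.
have suffixE : gap_poly c v1 * (psi1 \Po 'X^c) + gap_poly c v2 * (psi2 \Po 'X^c)
    = (gap_poly c v1 + gap_poly c v2) * (psi3 \Po 'X^c).
  by rewrite -linearD -v3E -(suffix_code_word s3) -E3 linearD /= !suffix_code_word.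
have Epq : gap_poly c v1 * (p \Po 'X^c) = gap_poly c v2 * (q \Po 'X^c).
  apply/eqP; rewrite -subr_eq0 oppr_pchar2 ?pchar2_polyF2 // !comp_polyD !mulrDr.
  by rewrite addrACA suffixE mulrDl addrACA !addrr_pchar2 ?pchar2_polyF2 ?addr0.
suff [/gap_poly_eq0-> /gap_poly_eq0->] : gap_poly c v1 = 0 /\ gap_poly c v2 = 0.
  by rewrite !linear0 addr0.
apply: (gapped_pair_eq0 c_gt0 ck p_neq0 q_neq0 pq
  (gap_poly_gapped c v1) (gap_poly_gapped c v2) Epq) => j j_lt.
have := congr1 (fun u : 'rV_(k - 2 * c) => u 0 (Ordinal j_lt)) Lw0.
by rewrite !mxE E3 prefix_code_word // v3E linearD.
Qed.

Lemma dim_code_space_sum3 (psi1 psi2 psi3 : {poly F}) : (3 * c <= k)%N ->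
  (size psi1 <= B)%N -> (size psi2 <= B)%N -> (size psi3 <= B)%N ->
  psi1 != psi2 -> psi2 != psi3 -> psi1 != psi3 ->
  (2 * k + 2 * c <= \dim (code_space psi1 + code_space psi2 + code_space psi3))%N.
Proof.
move=> ck s1 s2 s3 psi12 psi23 psi13.
have := dimv_sum_cap (code_space psi1) (code_space psi2).
have := dimv_sum_cap (code_space psi1 + code_space psi2) (code_space psi3).
have := dim_code_space_sum_cap ck s1 s2 s3 psi12 psi23 psi13.
rewrite code_space_cap_eq0 // dimv0 !dim_code_space //.
move: (\dim _) (\dim _) (\dim _) => a b d; lia.
Qed.

End Code.

Lemma divn_mul_leq (m k c : nat) : (0 < c)%N ->
  ((m + 1) %/ (k + 1) * (k %/ c) <= m %/ c)%N.
Proof.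
move=> c_gt0; rewrite leq_divRL // -mulnA.
apply: leq_trans (leq_mul (leqnn _) (leq_divM k c)) _.
have := leq_divM (m + 1) (k + 1).
case: ((m + 1) %/ (k + 1))%N => [|a]; first by rewrite mul0n.
by rewrite !mulSn mulnDr muln1; move: (a * k)%N => x; lia.
Qed.

Theorem mainTheorem10 (n k g : nat) :
  (0 < n)%N -> (0 < k)%N -> (0 < g)%N ->
  (3 * (g.+1 %/ 2) <= k)%N -> (2 * k + g <= n)%N ->
  B3_ge 'F_2 n k (k + g)
    (2 ^ (((n - 2 * k + 1) %/ (k + 1)) * (k %/ (g.+1 %/ 2))))%N.
Proof.
move=> _ k_gt0 g_gt0 ck n_ge; set c := (g.+1 %/ 2)%N in ck *.
set B := ((n - 2 * k) %/ c)%N.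
have c_gt0 : (0 < c)%N by rewrite /c; lia.
have g_le : (g <= 2 * c)%N by rewrite /c; lia.
have B_gt0 : (0 < B)%N by rewrite /B divn_gt0 //; lia.
have nB : (2 * k + c * B <= n)%N.
  by have := leq_divM (n - 2 * k) c; rewrite mulnC -/B; move: (B * c)%N => x; lia.
exists [seq code_space n k c (val psi) | psi <- enum {poly_B F}]; split; last first.
  rewrite size_map -cardT card_npoly card_Fp // leq_pexp2l //.
  exact: divn_mul_leq.
split; first rewrite map_inj_uniq ?enum_uniq // => psi1 psi2 /code_space_inj E.
  by apply: val_inj; apply: E c_gt0 B_gt0 nB k_gt0 (size_npoly _) (size_npoly _).
split=> [U /mapP[psi _ ->] | U1 U2 U3 /mapP[psi1 _ ->] /mapP[psi2 _ ->] /mapP[psi3 _ ->]].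
  by apply: (dim_code_space c_gt0 B_gt0 nB); apply: size_npoly.
have val_neq (a b : {poly_B F}) :
    code_space n k c (val a) != code_space n k c (val b) -> val a != val b.
  by apply: contraNneq => ->.
move=> /val_neq psi12 /val_neq psi23 /val_neq psi13.
apply: leq_trans (dim_code_space_sum3 c_gt0 B_gt0 nB ck (size_npoly psi1)
  (size_npoly psi2) (size_npoly psi3) psi12 psi23 psi13); lia.
Qed.
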